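(* Let $\mathcal{H}$ be a two-sided quaternionic Hilbert space whose inner product $\langle\cdot,\cdot\rangle$ satisfies in addition $\langle u,\lambda v\rangle=\langle\bar\lambda u,v\rangle$ for all $u,v\in\mathcal{H}$, $\lambda\in\mathbb{H}$. Then for each $n\ge1$ the formula $$\langle u_1\otimes\cdots\otimes u_n,\ v_1\otimes\cdots\otimes v_n\rangle=\langle\langle\cdots\langle\langle\langle u_1,v_1\rangle u_2,v_2\rangle u_3,v_3\rangle\cdots\rangle u_n,v_n\rangle$$ (extended additively) defines a quaternionic inner product on $\mathcal{H}^{\otimes n}$, which moreover satisfies the same additional property $\langle x,\lambda y\rangle=\langle\bar\lambda x,y\rangle$ for $x,y\in\mathcal{H}^{\otimes n}$, $\lambda\in\mathbb{H}$.
   Context: $\mathbb{H}$ denotes the quaternions. A quaternionic inner product on a right (or two-sided) $\mathbb{H}$-vector space $V$ is a map $\langle\cdot,\cdot\rangle:V\times V\to\mathbb{H}$ which is additive in each argument, satisfies $\langle u\alpha,v\beta\rangle=\bar\beta\langle u,v\rangle\alpha$ for $\alpha,\beta\in\mathbb{H}$, $\langle v,u\rangle=\overline{\langle u,v\rangle}$, and $\langle u,u\rangle\ge0$ with equality only for $u=0$. A two-sided quaternionic Hilbert space is an $\mathbb{H}$-bimodule with such an inner product, complete for the induced norm. $\mathcal{H}^{\otimes n}=\mathcal{H}\otimes_{\mathbb{H}}\cdots\otimes_{\mathbb{H}}\mathcal{H}$ ($n$ factors) is the tensor product of $\mathbb{H}$-bimodules (so $u\lambda\otimes v=u\otimes\lambda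 v$), itself an $\mathbb{H}$-bimodule with $\lambda(u_1\otimes\cdots\otimes u_n)=(\lambda u_1)\otimes\cdots\otimes u_n$ and $(u_1\otimes\cdots\otimes u_n)\lambda=u_1\otimes\cdots\otimes(u_n\lambda)$. In the formula, $\langle u_1,v_1\rangle u_2$ denotes left multiplication of $u_2$ by the quaternion $\langle u_1,v_1\rangle$. *)

From HB Require Import structures.
From mathcomp Require Import all_boot all_order all_algebra.
From mathcomp Require Import reals.
From mathcomp Require Import ring.
Set Implicit Arguments. Unset Strict Implicit. Unset Printing Implicit Defensive.
Import Order.TTheory GRing.Theory Num.Theory.
Local Open Scope ring_scope.

Section Quat.
Variable R : realType.

Record quat := Quat { qre : R; qi : R; qj : R; qk : R }.

Definition quat_to (q : quat) := (qre q, qi q, qj q, qk q).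
Definition quat_of (x : R * R * R * R) := let: (a, b, c, d) := x in Quat a b c d.
Lemma quat_toK : cancel quat_to quat_of. Proof. by case. Qed.

HB.instance Definition _ := Equality.copy quat (can_type quat_toK).
HB.instance Definition _ := Choice.copy quat (can_type quat_toK).

Definition qzero := Quat 0 0 0 0.
Definition qone := Quat 1 0 0 0.
Definition qadd p q := Quat (qre p + qre q) (qi p + qi q) (qj p + qj q) (qk p + qk q).
Definition qopp p := Quat (- qre p) (- qi p) (- qj p) (- qk p).
(* Hamilton product: i^2 = j^2 = k^2 = ijk = -1 *)
Definition qmul p q := Quat
  (qre p * qre q - qi p * qi q - qj p * qj q - qk p * qk q)
  (qre p * qi q + qi p * qre q + qj p * qk q - qk p * qj q)
  (qre p * qj q - qi p * qk q + qj p * qre q + qk p * qi q)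
  (qre p * qk q + qi p * qj q - qj p * qi q + qk p * qre q).

Lemma quatP p q : qre p = qre q -> qi p = qi q -> qj p = qj q -> qk p = qk q -> p = q.
Proof. by case: p; case: q => /= ? ? ? ? ? ? ? ? -> -> -> ->. Qed.

Lemma qaddA : associative qadd.
Proof. by move=> ? ? ?; apply: quatP => /=; ring. Qed.
Lemma qaddC : commutative qadd.
Proof. by move=> ? ?; apply: quatP => /=; ring. Qed.
Lemma qadd0 : left_id qzero qadd.
Proof. by move=> ?; apply: quatP => /=; ring. Qed.
Lemma qaddN : left_inverse qzero qopp qadd.
Proof. by move=> ?; apply: quatP => /=; ring. Qed.

HB.instance Definition _ := GRing.isZmodule.Build quat qaddA qaddC qadd0 qaddN.

Lemma qmulA : associative qmul.
Proof. by move=> ? ? ?; apply: quatP => /=; ring. Qed.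
Lemma qmul1 : left_id qone qmul.
Proof. by move=> ?; apply: quatP => /=; ring. Qed.
Lemma qmulr1 : right_id qone qmul.
Proof. by move=> ?; apply: quatP => /=; ring. Qed.
Lemma qmulDl : left_distributive qmul qadd.
Proof. by move=> ? ? ?; apply: quatP => /=; ring. Qed.
Lemma qmulDr : right_distributive qmul qadd.
Proof. by move=> ? ? ?; apply: quatP => /=; ring. Qed.
Lemma qone_neq0 : qone != qzero.
Proof. by apply/eqP => -[] /eqP; rewrite oner_eq0. Qed.

HB.instance Definition _ :=
  GRing.Zmodule_isNzRing.Build quat qmulA qmul1 qmulr1 qmulDl qmulDr qone_neq0.

Definition qconj p := Quat (qre p) (- qi p) (- qj p) (- qk p).
Definition qnonneg (q : quat) := [/\ qi q = 0, qj q = 0, qk q = 0 & 0 <= qre q].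

End Quat.

Section Hilbert.
Variables (R : realType) (V : zmodType).
Variables (lact : quat R -> V -> V) (ract : V -> quat R -> V).

Definition qbimodule :=
  [/\ [/\ (forall a u v, lact a (u + v) = lact a u + lact a v),
      (forall a b u, lact (a + b) u = lact a u + lact b u),
      (forall a b u, lact (a * b) u = lact a (lact b u)) &
      (forall u, lact 1 u = u)],
     [/\ (forall a u v, ract (u + v) a = ract u a + ract v a),
      (forall a b u, ract u (a + b) = ract u a + ract u b),
      (forall a b u, ract u (a * b) = ract (ract u a) b) &
      (forall u, ract u 1 = u)] &
      (forall a b u, lact a (ract u b) = ract (lact a u) b)].

Definition qinner_product (ip : V -> V -> quat R) :=
  [/\ (forall u u' v, ip (u + u') v = ip u v + ip u' v),
      (forall u v v', ip u (v + v') = ip u v + ip u v'),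
      (forall u v a b, ip (ract u a) (ract v b) = qconj b * ip u v * a),
      (forall u v, ip v u = qconj (ip u v)) &
      (forall u, qnonneg (ip u u) /\ (ip u u = 0 -> u = 0))].

Definition qnorm (ip : V -> V -> quat R) (u : V) : R := Num.sqrt (qre (ip u u)).

Definition qcomplete (ip : V -> V -> quat R) :=
  forall s : nat -> V,
    (forall e : R, 0 < e -> exists N, forall m k, (N <= m)%N -> (N <= k)%N ->
         qnorm ip (s m - s k) < e) ->
    exists l : V, forall e : R, 0 < e -> exists N, forall m, (N <= m)%N ->
         qnorm ip (s m - l) < e.

Definition two_sided_qhilbert (ip : V -> V -> quat R) :=
  [/\ qbimodule, qinner_product ip & qcomplete ip].

(* The algebraic tensor power H (x)_H ... (x)_H H  (n factors).         *)
(* An element is represented by a formal Z-linear combination           *)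
(* sum_k c_k [t_k] of n-tuples t_k : 'I_n -> V; two representatives     *)
(* denote the same tensor iff their difference lies in the subgroup     *)
(* generated by the multi-additivity and balancing relators.            *)
Variable n : nat.
Definition ntuple := {ffun 'I_n -> V}.
Definition formal := seq (int * ntuple).

Definition upd (t : ntuple) (i : 'I_n) (x : V) : ntuple :=
  [ffun j => if j == i then x else t j].

Definition coef (s : formal) (t : ntuple) : int :=
  \sum_(p <- s | p.2 == t) p.1.

Definition fscale (c : int) (s : formal) : formal := [seq (c * p.1, p.2) | p <- s].
Definition fneg (s : formal) : formal := fscale (-1) s.

Definition is_relator (r : formal) : Prop :=
  (exists (t : ntuple) (i : 'I_n) (x y : V),
      r = [:: (1, upd t i (x + y)); (-1, upd t i x); (-1, upd t i y)]) \/
  (exists (t : ntuple) (i j : 'I_n) (x y : V) (a : quat R),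
      val j = (val i).+1 /\
      r = [:: (1, upd (upd t i (ract x a)) j y); (-1, upd (upd t i x) j (lact a y))]).

Definition tnull (s : formal) : Prop :=
  exists rs : seq (int * formal),
    (forall r, r \in rs -> is_relator r.2) /\
    forall t, coef s t = \sum_(r <- rs) r.1 * coef r.2 t.

Definition tequiv (x y : formal) : Prop := tnull (x ++ fneg y).
Definition tadd (x y : formal) : formal := x ++ y.

Definition tlact (a : quat R) (x : formal) : formal :=
  [seq (p.1, [ffun j : 'I_n => if val j == 0%N then lact a (p.2 j) else p.2 j]) | p : int * ntuple <- x].
Definition tract (x : formal) (a : quat R) : formal :=
  [seq (p.1, [ffun j : 'I_n => if val j == n.-1 then ract (p.2 j) a else p.2 j]) | p : int * ntuple <- x].

(* <<...<<<u1,v1>u2,v2>u3,v3>...>un,vn> on lists of factors *)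
Fixpoint nested_ip_acc (ip : V -> V -> quat R) (acc : quat R) (us vs : seq V) : quat R :=
  match us, vs with
  | u :: us', v :: vs' => nested_ip_acc ip (ip (lact acc u) v) us' vs'
  | _, _ => acc
  end.
Definition nested_ip (ip : V -> V -> quat R) (us vs : seq V) : quat R :=
  match us, vs with
  | u :: us', v :: vs' => nested_ip_acc ip (ip u v) us' vs'
  | _, _ => 0
  end.

Definition elem_ip (ip : V -> V -> quat R) (t t' : ntuple) : quat R :=
  nested_ip ip [seq t i | i <- enum 'I_n] [seq t' i | i <- enum 'I_n].

Definition tensor_ip (ip : V -> V -> quat R) (x y : formal) : quat R :=
  \sum_(p <- x) \sum_(q <- y) (p.1 * q.1)%:~R * elem_ip ip p.2 q.2.

End Hilbert.

From mathcomp Require Import all_boot all_order all_algebra reals ring.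
Set Implicit Arguments. Unset Strict Implicit. Unset Printing Implicit Defensive.
Import Order.TTheory GRing.Theory Num.Theory.
Local Open Scope ring_scope.

(* Well-definedness: the nested formula is additive in each factor and does not
   change when a scalar moves from the right of one factor to the left of the
   next, since <w a, v> = <w, v> a; hence it vanishes on every relator.
   Positivity and definiteness go by induction on the number of factors.  For a
   representative x = sum_k u_k (x) y_k, Gram-Schmidt provides a finite
   orthonormal family E with u_k = sum_(e in E) e <u_k, e> for all k.  Moving the
   coefficients <u_k, e> into the second factors gives x = sum_(e in E) e (x) x_e,
   and, because <u_k, u_l> = sum_e conj <u_l, e> <u_k, e> and
   <u, l v> = <conj l u, v>, also <x, x> = sum_(e in E) <x_e, x_e>, where each x_e
   has one factor fewer. *)

Lemma additive_mulrz (U W : zmodType) (f : U -> W) :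
  {morph f : a b / a + b} -> forall a z, f (a *~ z) = f a *~ z.
Proof.
move=> fD.
have f0 : f 0 = 0 by apply: (addIr (f 0)); rewrite -fD !add0r.
have fN a : f (- a) = - f a by apply/eqP; rewrite -subr_eq0 opprK -fD addNr f0.
have fMn a k : f (a *+ k) = f a *+ k.
  by elim: k => [|k IH]; rewrite ?mulr0n ?f0 // !mulrS fD IH.
by move=> a [] k; rewrite ?NegzE ?mulrNz ?fN -!pmulrn fMn.
Qed.

Lemma set_nth_cat (T : Type) (x0 : T) (p s : seq T) k x :
  set_nth x0 (p ++ s) (size p + k) x = p ++ set_nth x0 s k x.
Proof. by elim: p => //= a p ->. Qed.

Section QuatFacts.
Variable R : realType.
Implicit Types p q : quat R.

Lemma qconjM p q : qconj (p * q) = qconj q * qconj p.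
Proof. by apply: quatP => /=; ring. Qed.
Lemma qconjD p q : qconj (p + q) = qconj p + qconj q.
Proof. by apply: quatP => /=; ring. Qed.
Lemma qconjK p : qconj (qconj p) = p.
Proof. by apply: quatP => /=; ring. Qed.
Lemma qconj1 : qconj (1 : quat R) = 1.
Proof. by apply: quatP => /=; ring. Qed.
Lemma qconj0 : qconj (0 : quat R) = 0.
Proof. by apply: quatP => /=; ring. Qed.

Lemma qconj_intr (z : int) : qconj (z%:~R : quat R) = z%:~R.
Proof. by rewrite (additive_mulrz qconjD) qconj1. Qed.

Lemma qconj_sum (I : Type) (s : seq I) (F : I -> quat R) :
  qconj (\sum_(i <- s) F i) = \sum_(i <- s) qconj (F i).
Proof. exact: (big_morph _ qconjD qconj0). Qed.

Definition qreal (r : R) : quat R := Quat r 0 0 0.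

Lemma qrealM (a b : R) : qreal a * qreal b = qreal (a * b).
Proof. by apply: quatP => /=; ring. Qed.
Lemma qconj_qreal a : qconj (qreal a) = qreal a.
Proof. by apply: quatP => /=; ring. Qed.

Lemma qnonneg_qreal p : qnonneg p -> p = qreal (qre p).
Proof. by case: p => a b c d [/= -> -> -> _]. Qed.

Lemma qnonneg0 : qnonneg (0 : quat R).
Proof. by split. Qed.

Lemma qnonnegD p q : qnonneg p -> qnonneg q -> qnonneg (p + q).
Proof.
case=> p1 p2 p3 p4 [] q1 q2 q3 q4; split => /=;
  by rewrite ?p1 ?p2 ?p3 ?q1 ?q2 ?q3 ?addr0 // addr_ge0.
Qed.

Lemma qnonneg_sum (I : Type) (s : seq I) (F : I -> quat R) :
  (forall i, qnonneg (F i)) -> qnonneg (\sum_(i <- s) F i).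
Proof. by move=> F_nneg; apply: (big_ind (@qnonneg R) qnonneg0 (@qnonnegD)). Qed.

Lemma qnonnegD_eq0 p q : qnonneg p -> qnonneg q -> p + q = 0 -> p = 0.
Proof.
case=> p1 p2 p3 p4 [] q1 q2 q3 q4 /(congr1 (@qre R)) /= pq0.
have /andP[/eqP p0 _] : (qre p == 0) && (qre q == 0) by rewrite -paddr_eq0 // pq0.
exact: quatP.
Qed.

Lemma qnonneg_sum_eq0 (I : eqType) (s : seq I) (F : I -> quat R) :
  (forall i, qnonneg (F i)) -> \sum_(i <- s) F i = 0 -> {in s, forall i, F i = 0}.
Proof.
move=> F_nneg; elim: s => [|a s IH] //; rewrite big_cons => sum0 i.
have Fa0 : F a = 0 by apply: qnonnegD_eq0 sum0 => //; exact: qnonneg_sum.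
rewrite in_cons => /orP[/eqP -> //|]; apply: IH.
by rewrite Fa0 add0r in sum0.
Qed.

End QuatFacts.

Section TensorRelations.
Variables (R : realType) (V : zmodType).
Variables (lact : quat R -> V -> V) (ract : V -> quat R -> V) (n : nat).
Local Notation tp := (ntuple V n).
Local Notation fm := (formal V n).
Local Notation null := (@tnull R V lact ract n).
Local Notation teq := (@tequiv R V lact ract n).

Definition of_factors (s : seq V) : tp := [ffun i : 'I_n => nth 0 s i].
Definition factors (t : tp) : seq V := [seq t i | i <- enum 'I_n].

Lemma size_factors t : size (factors t) = n.
Proof. by rewrite size_map size_enum_ord. Qed.

Lemma nth_factors t (i : 'I_n) : nth 0 (factors t) i = t i.
Proof. by rewrite (nth_map i) ?size_enum_ord // nth_ord_enum. Qed.

Lemma factorsK : cancel factors of_factors.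
Proof. by move=> t; apply/ffunP => i; rewrite ffunE nth_factors. Qed.

Lemma of_factorsK s : size s = n -> factors (of_factors s) = s.
Proof.
move=> s_size; apply: (@eq_from_nth _ 0); rewrite size_factors ?s_size // => k lt_k.
by rewrite (nth_factors _ (Ordinal lt_k)) ffunE.
Qed.

Lemma upd_of_factors (p rest : seq V) (i : 'I_n) z w : size p = i ->
  upd (of_factors (p ++ z :: rest)) i w = of_factors (p ++ w :: rest).
Proof.
move=> p_i; have -> : p ++ w :: rest = set_nth 0 (p ++ z :: rest) i w.
  by rewrite -p_i -[size p]addn0 set_nth_cat.
by apply/ffunP => j; rewrite !ffunE nth_set_nth.
Qed.

Lemma upd2_of_factors (p rest : seq V) (i j : 'I_n) z z' w w' :
  size p = i -> val j = (val i).+1 ->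
  upd (upd (of_factors (p ++ z :: z' :: rest)) i w) j w' =
  of_factors (p ++ w :: w' :: rest).
Proof.
move=> p_i j_i; rewrite upd_of_factors //.
rewrite -(cat_rcons w p (z' :: rest)) -(cat_rcons w p (w' :: rest)).
by rewrite upd_of_factors // size_rcons p_i.
Qed.

Lemma coef_cons (p : int * tp) (s : fm) t :
  coef (p :: s) t = (if p.2 == t then p.1 else 0) + coef s t.
Proof. by rewrite /coef big_cons; case: ifP; rewrite ?add0r. Qed.

Lemma coef_cat (s s' : fm) t : coef (s ++ s') t = coef s t + coef s' t.
Proof. by rewrite /coef big_cat. Qed.

Lemma coef_fscale c (s : fm) t : coef (fscale c s) t = c * coef s t.
Proof. by rewrite /coef /fscale big_map mulr_sumr. Qed.

Lemma coef_fneg (s : fm) t : coef (fneg s) t = - coef s t.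
Proof. by rewrite /fneg coef_fscale mulN1r. Qed.

Lemma coef_flatten (I : Type) (r : seq I) (f : I -> fm) t :
  coef (flatten (map f r)) t = \sum_(i <- r) coef (f i) t.
Proof.
elim: r => [|a r IH]; first by rewrite big_nil /coef big_nil.
by rewrite big_cons /= coef_cat IH.
Qed.

Lemma tnull_eq_coef (s s' : fm) : coef s =1 coef s' -> null s -> null s'.
Proof. by move=> ss' [rs [rs_rel s_rs]]; exists rs; split => // t; rewrite -ss'. Qed.

Lemma tnull_coef0 (s : fm) : coef s =1 (fun=> 0) -> null s.
Proof. by move=> s0; exists [::]; split => // t; rewrite s0 big_nil. Qed.

Lemma tnull_relator (r : fm) : is_relator lact ract r -> null r.
Proof.
move=> r_rel; exists [:: (1, r)]; split; first by move=> q; rewrite inE => /eqP ->.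
by move=> t; rewrite big_seq1 mul1r.
Qed.

Lemma tnull_cat (s s' : fm) : null s -> null s' -> null (s ++ s').
Proof.
move=> [rs [rs_rel s_rs]] [rs' [rs'_rel s'_rs']]; exists (rs ++ rs'); split.
  by move=> r; rewrite mem_cat => /orP[/rs_rel | /rs'_rel].
by move=> t; rewrite coef_cat big_cat s_rs s'_rs'.
Qed.

Lemma tnull_fscale c (s : fm) : null s -> null (fscale c s).
Proof.
move=> [rs [rs_rel s_rs]]; exists [seq (c * r.1, r.2) | r <- rs]; split.
  by move=> _ /mapP[r /rs_rel r_rel ->].
by move=> t; rewrite coef_fscale s_rs big_map mulr_sumr; apply: eq_bigr => r _; rewrite mulrA.
Qed.

Lemma tnull_flatten (I : eqType) (r : seq I) (f : I -> fm) :
  {in r, forall i, null (f i)} -> null (flatten (map f r)).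
Proof.
elim: r => [|a r IH] f_null; first by apply: tnull_coef0 => t; rewrite /coef big_nil.
apply: tnull_cat; first by apply: f_null; rewrite mem_head.
by apply: IH => i i_r; apply: f_null; rewrite in_cons i_r orbT.
Qed.

Lemma tequiv_coef (x y : fm) : coef x =1 coef y -> teq x y.
Proof. by move=> xy; apply: tnull_coef0 => t; rewrite coef_cat coef_fneg xy subrr. Qed.

Lemma tequiv_refl x : teq x x.
Proof. exact: tequiv_coef. Qed.

Lemma tequiv_sym x y : teq x y -> teq y x.
Proof.
move=> /(tnull_fscale (-1)); apply: tnull_eq_coef => t.
by rewrite coef_fscale !coef_cat !coef_fneg mulN1r opprD opprK addrC.
Qed.

Lemma tequiv_trans x y z : teq x y -> teq y z -> teq x z.
Proof.
move=> xy yz; apply: tnull_eq_coef (tnull_cat xy yz) => t.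
by rewrite !coef_cat !coef_fneg addrA subrK.
Qed.

Lemma tequiv_cat x y x' y' : teq x y -> teq x' y' -> teq (x ++ x') (y ++ y').
Proof.
move=> xy x'y'; apply: tnull_eq_coef (tnull_cat xy x'y') => t.
by rewrite !coef_cat !coef_fneg !coef_cat opprD addrACA.
Qed.

Lemma tequiv_fscale c x y : teq x y -> teq (fscale c x) (fscale c y).
Proof.
move=> /(tnull_fscale c); apply: tnull_eq_coef => t.
by rewrite coef_cat coef_fneg !coef_fscale coef_cat coef_fneg mulrBr.
Qed.

Lemma tequiv_nil x : teq x [::] <-> null x.
Proof. by rewrite /tequiv /= cats0. Qed.

Lemma tequiv_tnull x y : teq x y -> null y -> null x.
Proof.
move=> xy y_null; apply: tnull_eq_coef (tnull_cat xy y_null) => t.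
by rewrite !coef_cat coef_fneg subrK.
Qed.

Lemma tequiv_flatten (I : eqType) (r : seq I) (f g : I -> fm) :
  {in r, forall i, teq (f i) (g i)} -> teq (flatten (map f r)) (flatten (map g r)).
Proof.
elim: r => [|a r IH] fg /=; first exact: tequiv_refl.
apply: tequiv_cat; first by apply: fg; rewrite mem_head.
by apply: IH => i i_r; apply: fg; rewrite in_cons i_r orbT.
Qed.

Lemma tequiv_map_flatten (I : eqType) (r : seq I) (f : I -> int * tp) (g : I -> fm) :
  {in r, forall i, teq [:: f i] (g i)} -> teq (map f r) (flatten (map g r)).
Proof.
by move=> fg; rewrite -[map f r]flatten_seq1 -map_comp; apply: tequiv_flatten.
Qed.

Lemma tequiv_map (I : eqType) (r : seq I) (f g : I -> int * tp) :
  {in r, forall i, teq [:: f i] [:: g i]} -> teq (map f r) (map g r).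
Proof. by move=> fg; rewrite -[map g r]flatten_seq1 -map_comp; apply: tequiv_map_flatten. Qed.

Lemma tnull_tequiv x y : null x -> null y -> teq x y.
Proof. by move=> x_null /(tnull_fscale (-1)); apply: tnull_cat. Qed.

Section Slot.
Variables (p rest : seq V).
Hypothesis size_slot : (size p + (size rest).+1 = n)%N.

Lemma tequiv_slotD x y :
  teq [:: (1, of_factors (p ++ (x + y) :: rest))]
      [:: (1, of_factors (p ++ x :: rest)); (1, of_factors (p ++ y :: rest))].
Proof.
have lt_p : (size p < n)%N by rewrite -size_slot addnS ltnS leq_addr.
apply: tnull_relator; left; exists (of_factors (p ++ 0 :: rest)), (Ordinal lt_p), x, y.
by rewrite /fneg /fscale /= !mulr1 !upd_of_factors.
Qed.

Lemma tnull_slot0 : null [:: (1, of_factors (p ++ 0 :: rest))].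
Proof.
have /(tnull_fscale (-1)) := tequiv_slotD 0 0; rewrite addr0.
by apply: tnull_eq_coef => t; rewrite coef_fscale /= !coef_cons /coef big_nil; case: eqP.
Qed.

Lemma tequiv_slotN v :
  teq [:: (-1, of_factors (p ++ v :: rest))] [:: (1, of_factors (p ++ - v :: rest))].
Proof.
have := tequiv_tnull (tequiv_sym (tequiv_slotD v (- v))); rewrite subrr.
move=> /(_ tnull_slot0) /(tnull_fscale (-1)); apply: tnull_eq_coef => t.
by rewrite coef_fscale /= !coef_cons /coef big_nil; case: eqP; case: eqP.
Qed.

Lemma tequiv_slot_sum (I : Type) (s : seq I) (a : I -> V) :
  teq [:: (1, of_factors (p ++ (\sum_(i <- s) a i) :: rest))]
      [seq (1, of_factors (p ++ a i :: rest)) | i <- s].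
Proof.
elim: s => [|i s IH]; first by rewrite big_nil; apply/tequiv_nil; exact: tnull_slot0.
rewrite big_cons; apply: tequiv_trans (tequiv_slotD _ _) _.
exact: (tequiv_cat (tequiv_refl [:: (1, of_factors (p ++ a i :: rest))]) IH).
Qed.

Lemma tequiv_slotMz (c : int) u :
  teq [:: (c, of_factors (p ++ u :: rest))] [:: (1, of_factors (p ++ u *~ c :: rest))].
Proof.
have slotMn k : teq [:: (k%:Z, of_factors (p ++ u :: rest))]
                    [:: (1, of_factors (p ++ u *+ k :: rest))].
  elim: k => [|k IH].
    apply: tnull_tequiv; last exact: tnull_slot0.
    by apply: tnull_coef0 => t; rewrite coef_cons /coef big_nil; case: eqP.
  apply: (@tequiv_trans _ ([:: (k%:Z, of_factors (p ++ u :: rest))] ++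
                           [:: (1, of_factors (p ++ u :: rest))])).
    apply: tequiv_coef => t; rewrite coef_cat !coef_cons /coef big_nil.
    by case: eqP; rewrite ?addr0 // intS addrC.
  apply: tequiv_trans (tequiv_cat IH (tequiv_refl _)) _.
  by rewrite mulrSr; exact: tequiv_sym (tequiv_slotD _ _).
case: c => k; first exact: slotMn.
apply: (@tequiv_trans _ (fscale (-1) [:: (k.+1%:Z, of_factors (p ++ u :: rest))])).
  by apply: tequiv_coef => t; rewrite coef_fscale !coef_cons /coef big_nil; case: eqP;
    rewrite ?addr0 ?mulr0 // mulN1r.
apply: tequiv_trans (tequiv_fscale (-1) (slotMn k.+1)) _.
by rewrite /fscale /= mulr1 NegzE mulrNz; exact: tequiv_slotN.
Qed.

End Slot.

Lemma tequiv_slot_balance (p rest : seq V) x y a : (size p + (size rest).+2 = n)%N ->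
  teq [:: (1, of_factors (p ++ ract x a :: y :: rest))]
      [:: (1, of_factors (p ++ x :: lact a y :: rest))].
Proof.
move=> size_slot.
have lt_p1 : ((size p).+1 < n)%N by rewrite -size_slot !addnS !ltnS leq_addr.
have lt_p : (size p < n)%N by rewrite ltnW.
apply: tnull_relator; right.
exists (of_factors (p ++ 0 :: 0 :: rest)), (Ordinal lt_p), (Ordinal lt_p1), x, y, a.
by split => //; rewrite /fneg /fscale /= !mulr1 !upd2_of_factors.
Qed.

Lemma tequiv_flatten_exchange (I J : Type) (r : seq I) (s : seq J) (f : I -> J -> int * tp) :
  teq (flatten [seq [seq f i j | j <- s] | i <- r]) (flatten [seq [seq f i j | i <- r] | j <- s]).
Proof.
apply: tequiv_coef => t; rewrite !coef_flatten /coef.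
under eq_bigr => i _ do rewrite big_map big_mkcond.
under [RHS]eq_bigr => j _ do rewrite big_map big_mkcond.
exact: exchange_big.
Qed.

Definition fsum (W : zmodType) (F : tp -> W) (s : fm) : W := \sum_(p <- s) F p.2 *~ p.1.

Lemma fsum_coef (W : zmodType) (F : tp -> W) (s : fm) (S : seq tp) :
  uniq S -> {subset map snd s <= S} -> fsum F s = \sum_(t <- S) F t *~ coef s t.
Proof.
move=> S_uniq; elim: s => [|q s IH] s_S.
  by rewrite /fsum big_nil big1 // => t _; rewrite /coef big_nil mulr0z.
rewrite /fsum big_cons -/(fsum F s) IH; last by move=> t t_s; apply: s_S; rewrite inE t_s orbT.
under [RHS]eq_bigr => t _ do rewrite coef_cons mulrzDr.
rewrite big_split /=; congr (_ + _).
rewrite (bigD1_seq q.2) ?s_S ?mem_head //= eqxx big1 ?addr0 // => t.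
by rewrite eq_sym => /negbTE ->; rewrite mulr0z.
Qed.

Section BalancedMap.
Variables (W : zmodType) (F : tp -> W).
Hypothesis FD : forall t i x y, F (upd t i (x + y)) = F (upd t i x) + F (upd t i y).
Hypothesis F_balance : forall t (i j : 'I_n) x y a, val j = (val i).+1 ->
  F (upd (upd t i (ract x a)) j y) = F (upd (upd t i x) j (lact a y)).

Lemma fsum_relator r : is_relator lact ract r -> fsum F r = 0.
Proof.
case=> [[t [i [x [y ->]]]] | [t [i [j [x [y [a [j_i ->]]]]]]]].
  by rewrite /fsum !big_cons big_nil FD /= addr0 mulr1z !mulrN1z -opprD subrr.
by rewrite /fsum !big_cons big_nil F_balance //= addr0 mulr1z mulrN1z subrr.
Qed.

Lemma fsum_tnull s : null s -> fsum F s = 0.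
Proof.
move=> [rs [rs_rel s_rs]].
set S := undup (map snd s ++ flatten [seq map snd r.2 | r <- rs]).
have S_uniq : uniq S by apply: undup_uniq.
rewrite (fsum_coef _ S_uniq); last by move=> t t_s; rewrite mem_undup mem_cat t_s.
under eq_bigr => t _ do rewrite s_rs mulrz_sumr.
rewrite exchange_big /= big1_seq // => r r_rs.
under eq_bigr => t _ do rewrite mulrC mulrzA.
rewrite -mulrz_suml -fsum_coef //; first by rewrite fsum_relator ?mul0rz //; exact: rs_rel.
move=> t t_r; rewrite mem_undup mem_cat; apply/orP; right.
by apply/flattenP; exists (map snd r.2) => //; apply/mapP; exists r.
Qed.

End BalancedMap.

End TensorRelations.

Section QuaternionicHilbertSpace.
Variables (R : realType) (V : zmodType).
Variables (lact : quat R -> V -> V) (ract : V -> quat R -> V) (ip : V -> V -> quat R).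
Hypothesis lactDr : forall a u v, lact a (u + v) = lact a u + lact a v.
Hypothesis lactDl : forall a b u, lact (a + b) u = lact a u + lact b u.
Hypothesis lactM : forall a b u, lact (a * b) u = lact a (lact b u).
Hypothesis lact1 : forall u, lact 1 u = u.
Hypothesis ractDr : forall a b u, ract u (a + b) = ract u a + ract u b.
Hypothesis ractM : forall a b u, ract u (a * b) = ract (ract u a) b.
Hypothesis ract1 : forall u, ract u 1 = u.
Hypothesis lractC : forall a b u, lact a (ract u b) = ract (lact a u) b.
Hypothesis ipDl : forall u u' v, ip (u + u') v = ip u v + ip u' v.
Hypothesis ipDr : forall u v v', ip u (v + v') = ip u v + ip u v'.
Hypothesis ipS : forall u v a b, ip (ract u a) (ract v b) = qconj b * ip u v * a.
Hypothesis ipC : forall u v, ip v u = qconj (ip u v).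
Hypothesis ipP : forall u, qnonneg (ip u u) /\ (ip u u = 0 -> u = 0).
Hypothesis ipL : forall u v l, ip u (lact l v) = ip (lact (qconj l) u) v.

Lemma lact_intr z u : lact z%:~R u = u *~ z.
Proof. by rewrite (additive_mulrz (fun a b => lactDl a b u)) lact1. Qed.

Lemma ract0 u : ract u 0 = 0.
Proof. by have := additive_mulrz (fun a b => ractDr a b u) 0 0; rewrite !mulr0z. Qed.

Lemma ipNl u v : ip (- u) v = - ip u v.
Proof. by have := additive_mulrz (fun a b => ipDl a b v) u (-1); rewrite !mulrN1z. Qed.

Lemma ipBl u u' v : ip (u - u') v = ip u v - ip u' v.
Proof. by rewrite ipDl ipNl. Qed.

Lemma ipsuml (I : Type) (s : seq I) (F : I -> V) v :
  ip (\sum_(i <- s) F i) v = \sum_(i <- s) ip (F i) v.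
Proof.
apply: (big_morph _ (fun a b => ipDl a b v)).
by have := additive_mulrz (fun a b => ipDl a b v) 0 0; rewrite !mulr0z.
Qed.

Lemma ipsumr (I : Type) (s : seq I) (F : I -> V) u :
  ip u (\sum_(i <- s) F i) = \sum_(i <- s) ip u (F i).
Proof.
apply: (big_morph _ (ipDr u)).
by have := additive_mulrz (ipDr u) 0 0; rewrite !mulr0z.
Qed.

Lemma ipZl u v a : ip (ract u a) v = ip u v * a.
Proof. by have := ipS u v a 1; rewrite !ract1 qconj1 mul1r. Qed.

Lemma ipZr u v b : ip u (ract v b) = qconj b * ip u v.
Proof. by have := ipS u v 1 b; rewrite !ract1 mulr1. Qed.

Lemma exists_unit_multiple (w : V) : w != 0 ->
  exists c, ip (ract w c) (ract w c) = 1 /\ ract (ract w c) (ip w (ract w c)) = w.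
Proof.
move=> w_neq0; have [w_nneg w_def] := ipP w.
set N := qre (ip w w); have wwN : ip w w = qreal N by exact: qnonneg_qreal.
have N_gt0 : 0 < N.
  rewrite lt0r; case: w_nneg => _ _ _ ->; rewrite andbT.
  by apply: contra w_neq0 => /eqP N0; apply/eqP/w_def; rewrite wwN N0.
set s := (Num.sqrt N)^-1.
have ssN : s * (s * N) = 1.
  by rewrite mulrA -expr2 exprVn sqr_sqrtr ?ltW // mulVf // gt_eqF.
exists (qreal s); split.
  by rewrite ipS wwN qconj_qreal !qrealM [s * N * s]mulrC ssN.
by rewrite ipZr wwN qconj_qreal qrealM -ractM qrealM ssN ract1.
Qed.

Definition expansion (E : seq V) (u : V) : V := \sum_(e <- E) ract e (ip u e).

Fixpoint orthonormal (E : seq V) : Prop :=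
  if E is e :: E' then [/\ ip e e = 1, {in E', forall f, ip f e = 0} & orthonormal E']
  else True.

Lemma ip_expansionl E u v : ip (expansion E u) v = \sum_(e <- E) ip e v * ip u e.
Proof. by rewrite /expansion ipsuml; apply: eq_bigr => e _; rewrite ipZl. Qed.

Lemma ip_expansion_orthonormal E u e :
  orthonormal E -> e \in E -> ip (expansion E u) e = ip u e.
Proof.
elim: E => [|f E IH] //= [ff fE oE].
rewrite /expansion big_cons ipDl ipZl -/(expansion E u) in_cons.
case: eqVneq => [-> _ | _ /= eE]; last by rewrite ipC fE // qconj0 mul0r add0r IH.
by rewrite ff mul1r ip_expansionl big1_seq ?addr0 // => g /andP[_ gE]; rewrite fE ?mul0r.
Qed.

Lemma gram_schmidt (U : seq V) :
  exists E, orthonormal E /\ {in U, forall u, expansion E u = u}.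
Proof.
elim: U => [|u U [E [oE EU]]]; first by exists [::].
set w := u - expansion E u.
have Ew e : e \in E -> ip e w = 0.
  by move=> eE; rewrite ipC ipBl ip_expansion_orthonormal // subrr qconj0.
have expansion_w x : ip (expansion E x) w = 0.
  by rewrite ip_expansionl big1_seq // => e /andP[_ eE]; rewrite Ew ?mul0r.
have [w0 | w_neq0] := eqVneq w 0.
  exists E; split => // x; rewrite in_cons => /orP[/eqP -> | /EU //].
  by move/eqP: w0; rewrite subr_eq0 eq_sym => /eqP.
have [c [ee ew]] := exists_unit_multiple w_neq0.
exists (ract w c :: E); split; first by split => // f fE; rewrite ipZr Ew ?mulr0.
move=> x; rewrite /expansion big_cons -/(expansion E x) in_cons ipZr.
case/orP => [/eqP -> | xU].
  have -> : ip u w = ip w w by rewrite -{1}(subrK (expansion E u) u) ipDl expansion_w addr0.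
  by rewrite -ipZr ew subrK.
by rewrite -{1}(EU x xU) expansion_w mulr0 ract0 add0r EU.
Qed.

Lemma ip_expansion E u u' : expansion E u = u ->
  ip u u' = \sum_(e <- E) qconj (ip u' e) * ip u e.
Proof. by move=> Eu; rewrite -{1}Eu ipsuml; apply: eq_bigr => e _; rewrite ipZl ipC. Qed.

Local Notation nest := (nested_ip_acc lact ip).

Lemma nest_cons acc u us v vs : nest acc (u :: us) (v :: vs) = nest (ip (lact acc u) v) us vs.
Proof. by []. Qed.

Lemma nest_nilr acc us : nest acc us [::] = acc.
Proof. by case: us. Qed.

Lemma nestDl a b us vs : nest (a + b) us vs = nest a us vs + nest b us vs.
Proof. by elim: us a b vs => [|u us IH] a b [|v vs] //=; rewrite lactDl ipDl IH. Qed.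

Lemma nest_mulrz a z us vs : nest (a *~ z) us vs = nest a us vs *~ z.
Proof. exact: (additive_mulrz (fun a b => nestDl a b us vs)). Qed.

Lemma nest_sum (I : Type) (s : seq I) (F : I -> quat R) us vs :
  nest (\sum_(i <- s) F i) us vs = \sum_(i <- s) nest (F i) us vs.
Proof.
apply: (big_morph _ (fun a b => nestDl a b us vs)).
by have := nest_mulrz 0 0 us vs; rewrite !mulr0z.
Qed.

Lemma nest_cat acc p us vs : nest acc (p ++ us) vs = nest (nest acc p vs) us (drop (size p) vs).
Proof. by elim: p acc vs => [|x p IH] acc [|v vs] //=; rewrite nest_nilr. Qed.

Lemma nest_conj acc us vs : nest (qconj acc) vs us = qconj (nest acc us vs).
Proof. by elim: us acc vs => [|u us IH] acc [|v vs] //=; rewrite [ip _ u]ipC ipL qconjK IH. Qed.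

Lemma nest_slotD (p rest vs : seq V) x y : (size p < size vs)%N ->
  nest 1 (p ++ (x + y) :: rest) vs = nest 1 (p ++ x :: rest) vs + nest 1 (p ++ y :: rest) vs.
Proof. by move=> lt_p; rewrite !nest_cat (drop_nth 0 lt_p) /= lactDr ipDl nestDl. Qed.

Lemma nest_slot_balance (p rest vs : seq V) x y a : ((size p).+1 < size vs)%N ->
  nest 1 (p ++ ract x a :: y :: rest) vs = nest 1 (p ++ x :: lact a y :: rest) vs.
Proof.
move=> lt_p; rewrite !nest_cat (drop_nth 0 (ltnW lt_p)) (drop_nth 0 lt_p) /=.
by rewrite lractC ipZl lactM.
Qed.

Definition lscale_head (a : quat R) (w : seq V) : seq V :=
  if w is z :: r then lact a z :: r else w.

Lemma size_lscale_head a w : size (lscale_head a w) = size w.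
Proof. by case: w. Qed.

Lemma nest_lscale_head a b y y' : (0 < size y)%N -> (0 < size y')%N ->
  nest (qconj b * a) y y' = nest 1 (lscale_head a y) (lscale_head b y').
Proof. by case: y => [|z r]; case: y' => [|z' r'] //= _ _; rewrite lact1 ipL lactM. Qed.

(* [gram_sum fam] is the value of the nested formula on [x, x], for x the sum of
   the elementary tensors whose factors are listed by the members of [fam]. *)
Definition gram_sum (fam : seq (seq V)) : quat R :=
  \sum_(w <- fam) \sum_(w' <- fam) nest 1 w w'.

Lemma gram_sum_single (fam : seq (seq V)) : all (fun w => size w == 1%N) fam ->
  gram_sum fam = ip (\sum_(w <- fam) head 0 w) (\sum_(w <- fam) head 0 w).
Proof.
move=> /allP fam1; rewrite /gram_sum ipsuml; apply: eq_big_seq => w w_fam.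
rewrite ipsumr; apply: eq_big_seq => w' w'_fam.
move: (fam1 w w_fam) (fam1 w' w'_fam).
by case: w {w_fam} => [|u [|]] //; case: w' {w'_fam} => [|u' [|]] //= _ _; rewrite lact1.
Qed.

Lemma gram_sum_expand (fam : seq (seq V)) (E : seq V) :
  all (fun w => 1 < size w)%N fam -> {in map (head 0) fam, forall u, expansion E u = u} ->
  gram_sum fam =
    \sum_(e <- E) gram_sum [seq lscale_head (ip (head 0 w) e) (behead w) | w <- fam].
Proof.
move=> /allP fam_gt1 EU; rewrite /gram_sum.
under [RHS]eq_bigr => e _ do rewrite big_map; under [RHS]eq_bigr => e _ do
  under eq_bigr => w _ do rewrite big_map.
rewrite [RHS]exchange_big /=; apply: eq_big_seq => w w_fam.
rewrite [RHS]exchange_big /=; apply: eq_big_seq => w' w'_fam.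
have := fam_gt1 w w_fam; have := fam_gt1 w' w'_fam; have := EU _ (map_f (head 0) w_fam).
case: w {w_fam} => [|u [|v r]] //; case: w' {w'_fam} => [|u' [|v' r']] // Eu _ _.
rewrite /= in Eu.
rewrite nest_cons lact1 (ip_expansion u' Eu) nest_sum; apply: eq_bigr => e _.
by rewrite -nest_lscale_head.
Qed.

Lemma gram_sum_nonneg m (fam : seq (seq V)) :
  all (fun w => size w == m.+1) fam -> qnonneg (gram_sum fam).
Proof.
elim: m fam => [|m IH] fam fam_size.
  by rewrite gram_sum_single //; case: (ipP (\sum_(w <- fam) head 0 w)).
have [E [_ EU]] := gram_schmidt (map (head 0) fam).
rewrite (gram_sum_expand (E := E)) //; last first.
  by apply/allP => w /(allP fam_size) /eqP ->.
apply: qnonneg_sum => e; apply: IH; apply/allP => _ /mapP[w /(allP fam_size) /eqP w_size ->].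
by rewrite size_lscale_head size_behead w_size.
Qed.

Lemma nest_rcons acc us vs u v : size us = size vs ->
  nest acc (rcons us u) (rcons vs v) = ip (lact (nest acc us vs) u) v.
Proof. by elim: us acc vs => [|u' us IH] acc [|v' vs] //= [/IH]. Qed.

Lemma nested_ipE (us vs : seq V) : (0 < size us)%N -> (0 < size vs)%N ->
  nested_ip lact ip us vs = nest 1 us vs.
Proof. by case: us => [|u us]; case: vs => [|v vs] //= _ _; rewrite lact1. Qed.

Section TensorPower.
Variable n' : nat.
Local Notation n := n'.+1.
Local Notation tp := (ntuple V n).
Local Notation fm := (formal V n).
Local Notation null := (@tnull R V lact ract n).
Local Notation teq := (@tequiv R V lact ract n).
Local Notation elem := (@elem_ip R V lact n ip).
Local Notation T := (@tensor_ip R V lact n ip).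
Local Notation of_factors := (@of_factors V n).

Lemma size_take_factors (t : tp) (i : 'I_n) : size (take i (factors t)) = i.
Proof. by rewrite size_take size_factors ltn_ord. Qed.

Lemma factors_split (t : tp) (i : 'I_n) :
  factors t = take i (factors t) ++ t i :: drop i.+1 (factors t).
Proof. by rewrite -{1}(cat_take_drop i (factors t)) (drop_nth 0) ?size_factors // nth_factors. Qed.

Lemma factors_split2 (t : tp) (i j : 'I_n) : val j = (val i).+1 ->
  factors t = take i (factors t) ++ t i :: t j :: drop j.+1 (factors t).
Proof.
move=> j_i; have j_i' : nat_of_ord j = i.+1 := j_i.
by rewrite {1}(factors_split t i) -j_i' (drop_nth 0) ?size_factors ?nth_factors.
Qed.

Lemma factors_head (t : tp) : factors t = t ord0 :: drop 1 (factors t).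
Proof. by rewrite {1}(factors_split t ord0) take0. Qed.

Lemma factors_rcons (t : tp) : factors t = rcons (take n' (factors t)) (t ord_max).
Proof.
by rewrite {1}(factors_split t ord_max) drop_oversize ?size_factors ?cats1.
Qed.

Lemma factors_upd (t : tp) (i : 'I_n) p z0 rest z :
  factors t = p ++ z0 :: rest -> size p = i -> factors (upd t i z) = p ++ z :: rest.
Proof.
move=> t_p p_i; rewrite -(factorsK t) t_p upd_of_factors // of_factorsK //.
by rewrite -(size_factors t) t_p !size_cat.
Qed.

Lemma elem_factors (t t' : tp) : elem t t' = nest 1 (factors t) (factors t').
Proof. by rewrite /elem_ip nested_ipE ?size_factors. Qed.

Lemma elem_slotD (t t' : tp) (i : 'I_n) x y :
  elem (upd t i (x + y)) t' = elem (upd t i x) t' + elem (upd t i y) t'.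
Proof.
have upd_t z := factors_upd z (factors_split t i) (size_take_factors t i).
by rewrite !elem_factors !upd_t nest_slotD // size_take_factors size_factors.
Qed.

Lemma elem_slot_balance (t t' : tp) (i j : 'I_n) x y a : val j = (val i).+1 ->
  elem (upd (upd t i (ract x a)) j y) t' = elem (upd (upd t i x) j (lact a y)) t'.
Proof.
move=> j_i.
have upd2_t z z' : factors (upd (upd t i z) j z') =
    take i (factors t) ++ z :: z' :: drop j.+1 (factors t).
  move: (factors_upd z (factors_split2 t j_i) (size_take_factors t i)).
  rewrite -cat_rcons => upd_t; rewrite (factors_upd z' upd_t) ?cat_rcons //.
  by rewrite size_rcons size_take_factors j_i.
have j_i' : nat_of_ord j = i.+1 := j_i.
by rewrite !elem_factors !upd2_t nest_slot_balance // size_take_factors size_factors -j_i'.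
Qed.

Lemma tensor_ip_fsum (x y : fm) : T x y = fsum (fun t => fsum (elem t) y) x.
Proof.
rewrite /tensor_ip /fsum; apply: eq_bigr => p _; rewrite mulrz_suml.
by apply: eq_bigr => q _; rewrite mulrzl mulrC mulrzA.
Qed.

Lemma tensor_ip_tnulll (s y : fm) : null s -> T s y = 0.
Proof.
rewrite tensor_ip_fsum; apply: fsum_tnull => [t i x x' | t i j x x' a j_i].
  by rewrite /fsum -big_split; apply: eq_bigr => q _; rewrite elem_slotD mulrzDl.
by apply: eq_bigr => q _; rewrite elem_slot_balance.
Qed.

Lemma tensor_ip_catl (x x' y : fm) : T (x ++ x') y = T x y + T x' y.
Proof. by rewrite /tensor_ip big_cat. Qed.

Lemma tensor_ip_catr (x y y' : fm) : T x (y ++ y') = T x y + T x y'.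
Proof. by rewrite /tensor_ip -big_split; apply: eq_bigr => p _; rewrite big_cat. Qed.

Lemma tensor_ip_fnegl (x y : fm) : T (fneg x) y = - T x y.
Proof.
rewrite /tensor_ip /fneg /fscale big_map -sumrN; apply: eq_bigr => p _.
by rewrite -sumrN; apply: eq_bigr => q _; rewrite /= mulN1r mulNr intrN mulNr.
Qed.

Lemma elemC (t t' : tp) : elem t' t = qconj (elem t t').
Proof. by rewrite !elem_factors -nest_conj qconj1. Qed.

Lemma tensor_ipC (x y : fm) : T y x = qconj (T x y).
Proof.
rewrite /tensor_ip qconj_sum exchange_big; apply: eq_bigr => p _.
rewrite qconj_sum; apply: eq_bigr => q _.
by rewrite qconjM qconj_intr mulrzr mulrzl elemC mulrC.
Qed.

Lemma tensor_ip_tequiv (x x' y y' : fm) : teq x x' -> teq y y' -> T x y = T x' y'.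
Proof.
have tequiv_l (a a' b : fm) : teq a a' -> T a b = T a' b.
  by move=> aa'; apply/eqP; rewrite -subr_eq0 -tensor_ip_fnegl -tensor_ip_catl tensor_ip_tnulll.
by move=> /tequiv_l -> /tequiv_l yy'; rewrite tensor_ipC yy' -tensor_ipC.
Qed.

Definition ract_last (t : tp) (a : quat R) : tp := upd t ord_max (ract (t ord_max) a).
Definition lact_first (t : tp) (a : quat R) : tp := upd t ord0 (lact a (t ord0)).

Lemma tract_map (x : fm) a : tract ract x a = [seq (p.1, ract_last p.2 a) | p <- x].
Proof.
apply: eq_map => p; congr (_, _); apply/ffunP => j; rewrite !ffunE.
have -> : (val j == n.-1) = (j == ord_max) by [].
by case: eqP => [-> |].
Qed.

Lemma tlact_map l (x : fm) : tlact lact l x = [seq (p.1, lact_first p.2 l) | p <- x].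
Proof.
apply: eq_map => p; congr (_, _); apply/ffunP => j; rewrite !ffunE.
have -> : (val j == 0%N) = (j == ord0) by [].
by case: eqP => [-> |].
Qed.

Lemma elem_ract_last (t t' : tp) a b :
  elem (ract_last t a) (ract_last t' b) = qconj b * elem t t' * a.
Proof.
have factors_ract (s : tp) c :
    factors (ract_last s c) = rcons (take n' (factors s)) (ract (s ord_max) c).
  by rewrite -!cats1 (factors_upd _ (factors_split s ord_max)) ?size_take_factors //
       drop_oversize ?size_factors.
rewrite !elem_factors !factors_ract.
set p := take n' (factors t); set p' := take n' (factors t').
rewrite [factors t]factors_rcons [factors t']factors_rcons -/p -/p'.
by rewrite !nest_rcons ?size_take ?size_factors // lractC ipS.
Qed.

Lemma elem_lact_first (t t' : tp) l : elem t (lact_first t' l) = elem (lact_first t (qconj l)) t'.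
Proof.
have factors_lact (s : tp) c : factors (lact_first s c) = lact c (s ord0) :: drop 1 (factors s).
  exact: (@factors_upd s ord0 [::] _ _ _ (factors_head s)).
rewrite !elem_factors !factors_lact {1}(factors_head t) {2}(factors_head t').
by rewrite !nest_cons !lact1 ipL.
Qed.

Lemma tensor_ip_tract (x y : fm) a b :
  T (tract ract x a) (tract ract y b) = qconj b * T x y * a.
Proof.
rewrite !tract_map /tensor_ip big_map mulr_sumr mulr_suml; apply: eq_bigr => p _.
rewrite big_map mulr_sumr mulr_suml; apply: eq_bigr => q _.
by rewrite /= elem_ract_last !mulrzl mulrzAr mulrzAl.
Qed.

Lemma tensor_ip_tlact (x y : fm) l : T x (tlact lact l y) = T (tlact lact (qconj l) x) y.
Proof.
rewrite !tlact_map /tensor_ip big_map; apply: eq_bigr => p _.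
by rewrite big_map; apply: eq_bigr => q _; rewrite /= elem_lact_first.
Qed.

Definition gram_family (x : fm) : seq (seq V) :=
  [seq lscale_head p.1%:~R (factors p.2) | p <- x].

Lemma size_gram_family (x : fm) : all (fun w => size w == n) (gram_family x).
Proof. by apply/allP => _ /mapP[p _ ->]; rewrite size_lscale_head size_factors. Qed.

Lemma tensor_ip_gram (x : fm) : T x x = gram_sum (gram_family x).
Proof.
rewrite /gram_sum /tensor_ip big_map; apply: eq_bigr => p _.
rewrite big_map; apply: eq_bigr => q _.
rewrite -nest_lscale_head ?size_factors // qconj_intr -intrM nest_mulrz -elem_factors.
by rewrite mulrzl mulrC.
Qed.

Lemma tensor_ip_nonneg (x : fm) : qnonneg (T x x).
Proof. by rewrite tensor_ip_gram; apply: gram_sum_nonneg (size_gram_family x). Qed.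

Lemma tequiv_expand_head (p rest E : seq V) u y : (size p + (size rest).+2 = n)%N ->
  expansion E u = u ->
  teq [:: (1, of_factors (p ++ u :: y :: rest))]
      [seq (1, of_factors (rcons p e ++ lact (ip u e) y :: rest)) | e <- E].
Proof.
move=> size_slot Eu; rewrite -{1}Eu /expansion.
apply: tequiv_trans (tequiv_slot_sum lact ract (p := p) (rest := y :: rest) size_slot _ _) _.
by apply: tequiv_map => e _; rewrite cat_rcons; apply: tequiv_slot_balance.
Qed.

(* Induction on the number [m.+1] of factors that are not yet fixed; the prefix
   [p] collects the basis vectors chosen so far. *)
Lemma gram_sum_eq0_tnull m (p : seq V) (fam : seq (seq V)) :
  (size p + m.+1 = n)%N -> all (fun w => size w == m.+1) fam -> gram_sum fam = 0 ->
  null [seq (1, of_factors (p ++ w)) | w <- fam].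
Proof.
elim: m p fam => [|m IH] p fam size_p fam_size fam0.
  have heads0 : \sum_(w <- fam) head 0 w = 0.
    by case: (ipP (\sum_(w <- fam) head 0 w)) => _; apply; rewrite -gram_sum_single.
  have -> : [seq (1, of_factors (p ++ w)) | w <- fam] =
            [seq ((1 : int), of_factors (p ++ [:: head 0 w])) | w <- fam].
    by apply/eq_in_map => w /(allP fam_size); case: w => [|u []].
  apply: tequiv_tnull (tequiv_sym (tequiv_slot_sum lact ract (p := p) (rest := [::]) size_p _ _)) _.
  by rewrite heads0; exact: tnull_slot0.
have [E [_ EU]] := gram_schmidt (map (head 0) fam).
set fam_e := fun e => [seq lscale_head (ip (head 0 w) e) (behead w) | w <- fam].
have fam_e_size e : all (fun w => size w == m.+1) (fam_e e).
  apply/allP => _ /mapP[w /(allP fam_size) /eqP w_size ->].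
  by rewrite size_lscale_head size_behead w_size.
have fam_e0 : {in E, forall e, gram_sum (fam_e e) = 0}.
  apply: qnonneg_sum_eq0 => [e|]; first exact: gram_sum_nonneg (fam_e_size e).
  by rewrite -gram_sum_expand //; apply/allP => w /(allP fam_size) /eqP ->.
pose g w e := ((1 : int), of_factors (rcons p e ++ lscale_head (ip (head 0 w) e) (behead w))).
apply: (@tequiv_tnull _ _ _ _ _ _ (flatten [seq [seq g w e | w <- fam] | e <- E])).
  apply: tequiv_trans (tequiv_flatten_exchange lact ract fam E g).
  apply: tequiv_map_flatten => w w_fam; have := EU _ (map_f (head 0) w_fam).
  have := allP fam_size w w_fam.
  case: w {w_fam} => [|u [|y rest]] //= /eqP[w_size] Eu.
  by apply: tequiv_expand_head => //; rewrite w_size.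
apply: tnull_flatten => e e_E; have := IH (rcons p e) (fam_e e); rewrite -map_comp.
by apply; rewrite ?fam_e0 // size_rcons addSnnS.
Qed.

Lemma tensor_ip_eq0 (x : fm) : T x x = 0 -> null x.
Proof.
rewrite tensor_ip_gram => x0.
have := gram_sum_eq0_tnull (p := [::]) (erefl _) (size_gram_family x) x0.
apply: tequiv_tnull; rewrite -map_comp -[x in teq x _]map_id.
apply: tequiv_map => -[c t] _.
rewrite -{1}(factorsK t) /= (factors_head t) /= lact_intr.
by apply: (tequiv_slotMz lact ract (p := [::])); rewrite size_drop size_factors subn1.
Qed.

End TensorPower.

End QuaternionicHilbertSpace.

Theorem proposition4p2 (R : realType) (V : zmodType)
    (lact : quat R -> V -> V) (ract : V -> quat R -> V) (ip : V -> V -> quat R) :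
  two_sided_qhilbert lact ract ip ->
  (forall (u v : V) (l : quat R), ip u (lact l v) = ip (lact (qconj l) u) v) ->
  forall n : nat, (0 < n)%N ->
  let T := @tensor_ip R V lact n ip in
  (forall x x' y y' : formal V n, tequiv lact ract x x' -> tequiv lact ract y y' ->
     T x y = T x' y') /\
  (forall x x' y : formal V n, T (tadd x x') y = T x y + T x' y) /\
  (forall x y y' : formal V n, T x (tadd y y') = T x y + T x y') /\
  (forall (x y : formal V n) (a b : quat R),
     T (tract ract x a) (tract ract y b) = qconj b * T x y * a) /\
  (forall x y : formal V n, T y x = qconj (T x y)) /\
  (forall x : formal V n, qnonneg (T x x)) /\
  (forall x : formal V n, T x x = 0 -> tequiv lact ract x [::]) /\
  (forall (x y : formal V n) (l : quat R), T x (tlact lact l y) = T (tlact lact (qconj l) x) y).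
Proof.
move=> [[[lactDr lactDl lactM lact1] [_ ractDr ractM ract1] lractC] [ipDl ipDr ipS ipC ipP] _].
move=> ipL [//|n'] _ T; rewrite {}/T.
split; first by move=> *; apply: tensor_ip_tequiv.
split; first exact: tensor_ip_catl.
split; first exact: tensor_ip_catr.
split; first by move=> *; apply: tensor_ip_tract.
split; first by move=> *; apply: tensor_ipC.
split; first by move=> x; apply: tensor_ip_nonneg.
split; first by move=> x /tensor_ip_eq0 x_null; apply/tequiv_nil; apply: x_null.
by move=> *; apply: tensor_ip_tlact.
Qed.
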